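(* Let $A$ be an $\mathbb{R}$-algebra and $B$ an $A$-algebra with structure morphism $\iota:A\to B$. If $B$ has the substitution property over $A$, then the induced map $\mathrm{Spec}_r B\to \mathrm{Spec}_r A$ is bijective and continuous, both with respect to the real spectrum topology and with respect to the constructible topology.
   Context: Substitution property: for every real closed field $R$ and every ring homomorphism $\phi:A\to R$ there exists one and only one ring homomorphism $\psi:B\to R$ with $\psi\circ\iota=\phi$. The real spectrum $\mathrm{Spec}_r A$ of a ring $A$ is the set of equivalence classes of ring homomorphisms from $A$ into real closed fields, for the equivalence relation generated by $\pi\sim\pi'$ when $\pi':A\to R'$ factors as $\pi$ followed by a field homomorphism $R\to R'$. The real spectrum topology has as basis the sets $\{\alpha\mid a(\alpha)>0\}$ (finite intersections thereof), $a\in A$; the constructible topology is generated by boolean combinations of such sets. The map $\mathrm{Spec}_r B\to\mathrm{Spec}_r A$ sends the class of $\beta$ to the class of $\beta\circ\iota$. *)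

From HB Require Import structures.
From Stdlib Require Import Relation_Operators ClassicalEpsilon.
From mathcomp Require Import all_boot all_order all_algebra.
From mathcomp Require Import Rstruct.
Set Implicit Arguments. Unset Strict Implicit. Unset Printing Implicit Defensive.
Import Order.TTheory GRing.Theory Num.Theory.
Local Open Scope ring_scope.

Definition Rreal : comUnitRingType := Rdefinitions.R.

(* A representative of a point of the real spectrum: a ring homomorphism
   from A into some real closed field. *)
Definition rpoint (A : comPzRingType) := {R : rcfType & {rmorphism A -> R}}.

Definition rfactor (A : comPzRingType) (p q : rpoint A) : Prop :=
  exists f : {rmorphism projT1 p -> projT1 q},
    forall a : A, projT2 q a = f (projT2 p a).

Definition requiv (A : comPzRingType) : rpoint A -> rpoint A -> Prop :=
  clos_refl_sym_trans (rpoint A) (@rfactor A).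

Definition rclass (A : comPzRingType) (p : rpoint A) : rpoint A -> Prop :=
  requiv p.

Definition Spec_r (A : comPzRingType) :=
  {C : rpoint A -> Prop | exists p, C = rclass p}.

Definition rpos (A : comPzRingType) (a : A) (x : Spec_r A) : Prop :=
  exists p, sval x p /\ 0 < projT2 p a.

(* Real spectrum topology: basis = finite intersections of {a > 0}. *)
Definition rs_open (A : comPzRingType) (U : Spec_r A -> Prop) : Prop :=
  forall x, U x -> exists s : seq A,
    List.Forall (fun a => rpos a x) s /\
    forall y, List.Forall (fun a => rpos a y) s -> U y.

Inductive cform (A : Type) : Type :=
| CTrue
| CPos of A
| CNot of cform A
| CAnd of cform A & cform A
| COr of cform A & cform A.

Fixpoint csat (A : comPzRingType) (f : cform A) (x : Spec_r A) : Prop :=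
  match f with
  | CTrue => True
  | CPos a => rpos a x
  | CNot g => ~ csat g x
  | CAnd g h => csat g x /\ csat h x
  | COr g h => csat g x \/ csat h x
  end.

(* Constructible topology: generated by the constructible sets (which form
   a basis, being closed under finite intersection). *)
Definition con_open (A : comPzRingType) (U : Spec_r A -> Prop) : Prop :=
  forall x, U x -> exists f : cform A,
    csat f x /\ forall y, csat f y -> U y.

Definition rpull (A B : comPzRingType) (iota : {rmorphism A -> B})
  (p : rpoint B) : rpoint A :=
  existT _ (projT1 p) (projT2 p \o iota : {rmorphism A -> projT1 p}).

Definition spec_map (A B : comPzRingType) (iota : {rmorphism A -> B})
  (x : Spec_r B) : Spec_r A :=
  let p := proj1_sig (constructive_indefinite_description _ (proj2_sig x)) in
  exist _ (rclass (rpull iota p)) (ex_intro _ (rpull iota p) erefl).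

Definition substitution_property (A B : comPzRingType)
  (iota : {rmorphism A -> B}) : Prop :=
  forall (R : rcfType) (phi : {rmorphism A -> R}),
    exists psi : {rmorphism B -> R},
      (forall a, psi (iota a) = phi a) /\
      forall psi' : {rmorphism B -> R},
        (forall a, psi' (iota a) = phi a) -> forall b, psi' b = psi b.

Definition continuous_wrt (X Y : Type) (openX : (X -> Prop) -> Prop)
  (openY : (Y -> Prop) -> Prop) (f : X -> Y) : Prop :=
  forall U, openY U -> openX (fun x => U (f x)).

(* Field homomorphisms between real closed fields are order embeddings, since
   the positive elements are exactly the nonzero squares. Hence the sign of
   [a] at a point of the real spectrum does not depend on the representative,
   and pulling back along [iota] sends the basic set {a > 0} to {iota a > 0};
   this gives continuity for both topologies. The substitution property lifts
   each point [A -> R] to a unique point [B -> R]; by uniqueness the lift is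
   compatible with factoring through field homomorphisms, so it descends to an
   inverse of the induced map. *)
From HB Require Import structures.
From Stdlib Require Import List Relation_Operators ClassicalEpsilon.
From Stdlib Require Import FunctionalExtensionality PropExtensionality ProofIrrelevance.
From mathcomp Require Import all_boot all_order all_algebra.
From mathcomp Require Import Rstruct.
Set Implicit Arguments. Unset Strict Implicit. Unset Printing Implicit Defensive.
Import Order.TTheory GRing.Theory Num.Theory.
Local Open Scope ring_scope.

Lemma rmorph_gt0 (R1 : rcfType) (R2 : realDomainType)
    (f : {rmorphism R1 -> R2}) (x : R1) :
  (0 < f x) = (0 < x).
Proof.
have pos_gt0 y : 0 < y -> 0 < f y.
  move=> y_gt0; rewrite -(sqr_sqrtr (ltW y_gt0)) rmorphXn /=.
  by rewrite lt_def sqr_ge0 andbT sqrf_eq0 fmorph_eq0 sqrtr_eq0 -ltNge.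
case: (ltgtP x 0) => [x_lt0 | /pos_gt0-> // | ->]; last by rewrite rmorph0.
have := pos_gt0 (- x); rewrite oppr_gt0 x_lt0 rmorphN oppr_gt0 => /(_ isT).
by move=> fx_lt0; rewrite ltNge (ltW fx_lt0).
Qed.

Section RealSpectrum.
Variable A : comPzRingType.
Implicit Types (p q : rpoint A) (x y : Spec_r A).

Lemma requiv_gt0 p q (a : A) : requiv p q -> (0 < projT2 p a) = (0 < projT2 q a).
Proof.
elim=> {p q} [p q [f ->] | p | p q _ -> | p q r _ -> _ ->] //.
by rewrite rmorph_gt0.
Qed.

Definition rep x : rpoint A :=
  proj1_sig (constructive_indefinite_description _ (proj2_sig x)).

Lemma repP x : sval x = rclass (rep x).
Proof. exact: proj2_sig (constructive_indefinite_description _ (proj2_sig x)). Qed.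

Lemma rep_mem x : sval x (rep x).
Proof. by rewrite repP; apply: rst_refl. Qed.

Lemma Spec_r_eq x y : requiv (rep x) (rep y) -> x = y.
Proof.
move=> xy; have class_xy : sval x = sval y.
  rewrite !repP; apply: functional_extensionality => r.
  apply: propositional_extensionality; split; first exact: rst_trans (rst_sym _ _ _ _ xy).
  exact: rst_trans xy.
case: x y class_xy {xy} => [Cx x_cl] [Cy y_cl] /= eCxy; subst Cy.
by congr exist; apply: proof_irrelevance.
Qed.

Lemma rposE (a : A) x p : sval x p -> rpos a x <-> 0 < projT2 p a.
Proof.
rewrite repP => xp; split; last by exists p; rewrite repP.
move=> [q [xq q_gt0]]; rewrite repP in xq.
by rewrite -(requiv_gt0 a (rst_trans _ _ _ _ _ (rst_sym _ _ _ _ xq) xp)).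
Qed.

End RealSpectrum.

Section Pullback.
Variables (A B : comPzRingType) (iota : {rmorphism A -> B}).

Lemma rpull_requiv (p q : rpoint B) :
  requiv p q -> requiv (rpull iota p) (rpull iota q).
Proof.
elim=> {p q} [p q [f fE] | p | p q _ | p q r _ pq _ qr].
- by apply: rst_step; exists f => a; apply: fE.
- exact: rst_refl.
- exact: rst_sym.
- exact: rst_trans pq qr.
Qed.

Lemma spec_mapE (x : Spec_r B) : sval (spec_map iota x) = rclass (rpull iota (rep x)).
Proof. by []. Qed.

Lemma rep_spec_map (x : Spec_r B) : requiv (rep (spec_map iota x)) (rpull iota (rep x)).
Proof. exact: rst_sym (rep_mem (spec_map iota x)). Qed.

Lemma rpos_spec_map (a : A) (x : Spec_r B) :
  rpos a (spec_map iota x) <-> rpos (iota a) x.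
Proof.
rewrite (rposE a (p := rpull iota (rep x))); last by rewrite spec_mapE; apply: rst_refl.
exact: iff_sym (rposE _ (rep_mem x)).
Qed.

Fixpoint cform_map (f : cform A) : cform B :=
  match f with
  | CTrue => CTrue _
  | CPos a => CPos (iota a)
  | CNot g => CNot (cform_map g)
  | CAnd g h => CAnd (cform_map g) (cform_map h)
  | COr g h => COr (cform_map g) (cform_map h)
  end.

Lemma csat_spec_map (f : cform A) (x : Spec_r B) :
  csat f (spec_map iota x) <-> csat (cform_map f) x.
Proof.
elim: f => [| a | g IHg | g IHg h IHh | g IHg h IHh] /=.
- by [].
- exact: rpos_spec_map.
- by rewrite IHg.
- by rewrite IHg IHh.
- by rewrite IHg IHh.
Qed.

Lemma Forall_rpos_spec_map (s : seq A) (x : Spec_r B) :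
  Forall (fun a => rpos a (spec_map iota x)) s <->
  Forall (fun b => rpos b x) (List.map iota s).
Proof.
by rewrite Forall_map; split; apply: Forall_impl => a /rpos_spec_map.
Qed.

Lemma spec_map_rs_continuous :
  continuous_wrt (@rs_open B) (@rs_open A) (spec_map iota).
Proof.
move=> U U_open x /U_open [s [xs sU]]; exists (List.map iota s); split.
- exact/Forall_rpos_spec_map.
- by move=> y /Forall_rpos_spec_map /sU.
Qed.

Lemma spec_map_con_continuous :
  continuous_wrt (@con_open B) (@con_open A) (spec_map iota).
Proof.
move=> U U_open x /U_open [f [xf fU]]; exists (cform_map f); split.
- exact/csat_spec_map.
- by move=> y /csat_spec_map /fU.
Qed.

End Pullback.

Section Substitution.
Variables (A B : comPzRingType) (iota : {rmorphism A -> B}).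
Hypothesis subst_iota : substitution_property iota.

Definition rlift (q : rpoint A) : rpoint B :=
  existT _ (projT1 q)
    (proj1_sig (constructive_indefinite_description _ (subst_iota (projT2 q)))).

Lemma rlift_spec (q : rpoint A) :
  (forall a, projT2 (rlift q) (iota a) = projT2 q a) /\
  forall psi : {rmorphism B -> projT1 q},
    (forall a, psi (iota a) = projT2 q a) -> forall b, psi b = projT2 (rlift q) b.
Proof. exact: proj2_sig (constructive_indefinite_description _ (subst_iota _)). Qed.

Lemma rlift_requiv (p q : rpoint A) : requiv p q -> requiv (rlift p) (rlift q).
Proof.
elim=> {p q} [p q [f fE] | p | p q _ | p q r _ pq _ qr].
- apply: rst_step; exists f => b.
  have [liftE _] := rlift_spec p; have [_ lift_uniq] := rlift_spec q.
  by symmetry; apply: (lift_uniq (f \o projT2 (rlift p))) => a /=; rewrite liftE fE.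
- exact: rst_refl.
- exact: rst_sym.
- exact: rst_trans pq qr.
Qed.

Lemma rlift_rpull (p : rpoint B) : requiv p (rlift (rpull iota p)).
Proof.
apply: rst_step; exists idfun => b /=.
by have [_ lift_uniq] := rlift_spec (rpull iota p); rewrite -(lift_uniq (projT2 p)).
Qed.

Lemma rpull_rlift (q : rpoint A) : requiv q (rpull iota (rlift q)).
Proof.
apply: rst_step; exists idfun => a /=.
by have [liftE _] := rlift_spec q; rewrite liftE.
Qed.

Definition spec_lift (z : Spec_r A) : Spec_r B :=
  exist _ (rclass (rlift (rep z))) (ex_intro _ (rlift (rep z)) erefl).

Lemma rep_spec_lift (z : Spec_r A) : requiv (rep (spec_lift z)) (rlift (rep z)).
Proof. exact: rst_sym (rep_mem (spec_lift z)). Qed.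

Lemma spec_liftK : cancel spec_lift (spec_map iota).
Proof.
move=> z; apply: Spec_r_eq.
apply: rst_trans (rep_spec_map iota _) _; apply: rst_sym.
exact: rst_trans (rpull_rlift _) (rpull_requiv iota (rst_sym _ _ _ _ (rep_spec_lift z))).
Qed.

Lemma spec_mapK : cancel (spec_map iota) spec_lift.
Proof.
move=> x; apply: Spec_r_eq.
apply: rst_trans (rep_spec_lift _) _.
apply: rst_trans (rlift_requiv (rep_spec_map iota x)) _.
exact: rst_sym (rlift_rpull _).
Qed.

End Substitution.

Theorem proposition2p3 (A : comPzRingType) (j : {rmorphism Rreal -> A})
  (B : comPzRingType) (iota : {rmorphism A -> B}) :
  substitution_property iota ->
  bijective (spec_map iota) /\
  continuous_wrt (@rs_open B) (@rs_open A) (spec_map iota) /\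
  continuous_wrt (@con_open B) (@con_open A) (spec_map iota).
Proof.
move=> subst_iota; split.
  exact: Bijective (spec_mapK subst_iota) (spec_liftK subst_iota).
split; [exact: spec_map_rs_continuous | exact: spec_map_con_continuous].
Qed.
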